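(* Fix $m,n,s\in\mathbb{N}$ with $s\le m\le n$. Suppose that there exists an $m$-by-$n$ matrix $A$ with integer entries such that any $s$ of the columns of $A$ are linearly independent. Then there also exists an $m$-by-$n$ matrix $B$ with integer entries such that any $s$ of the columns of $B$ are linearly independent, $B$ has rank $m$, and $$\|B\|_{\ell_2^n\to\ell_2^m}\le\sqrt{1+\|A\|_{\ell_2^n\to\ell_2^m}^2}.$$
   Context: $\|\cdot\|_{\ell_2^n\to\ell_2^m}$ denotes the operator norm from $\mathbb{R}^n$ to $\mathbb{R}^m$, both equipped with the Euclidean norm. *)

From HB Require Import structures.
From mathcomp Require Import all_boot all_order all_algebra.
From mathcomp Require Import all_classical all_reals.
Set Implicit Arguments. Unset Strict Implicit. Unset Printing Implicit Defensive.
Import Order.TTheory GRing.Theory Num.Theory.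
Local Open Scope ring_scope.
Local Open Scope classical_set_scope.

Definition intmx (R : realType) (m n : nat) (A : 'M[int]_(m, n)) : 'M[R]_(m, n) :=
  map_mx (fun z : int => z%:~R) A.

Definition norm2 (R : realType) (n : nat) (x : 'cV[R]_n) : R :=
  Num.sqrt (\sum_(i < n) x i 0 ^+ 2).

Definition opnorm (R : realType) (m n : nat) (A : 'M[R]_(m, n)) : R :=
  sup [set norm2 (A *m x) | x in [set x : 'cV[R]_n | norm2 x <= 1]].

Definition any_s_cols_indep (F : fieldType) (m n s : nat) (A : 'M[F]_(m, n)) : Prop :=
  forall f : 'I_s -> 'I_n, injective f -> row_free (colsub f A)^T.

(* Replace some rows of A by distinct standard unit rows e_k, chosen so that
   the row space only grows and finally becomes full.  Every column relation
   of B is then one of A, so B inherits the independence of any s columns.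
   A row of B is either a row of A or a coordinate of x, and distinct patched
   rows pick distinct coordinates, so |Bx|^2 <= |Ax|^2 + |x|^2. *)

From HB Require Import structures.
From mathcomp Require Import all_boot all_order all_algebra.
From mathcomp Require Import all_classical all_reals.
From mathcomp Require Import zify.
Set Implicit Arguments. Unset Strict Implicit. Unset Printing Implicit Defensive.
Import Order.TTheory GRing.Theory Num.Theory.
Local Open Scope ring_scope.

Definition unit_patch (K : pzSemiRingType) (m n : nat) (p : 'I_m -> option 'I_n)
    (A : 'M[K]_(m, n)) : 'M[K]_(m, n) :=
  \matrix_(i, j) if p i is Some k then (k == j)%:R else A i j.

Definition pinjective (m n : nat) (p : 'I_m -> option 'I_n) : Prop :=
  forall i i' k, p i = Some k -> p i' = Some k -> i = i'.

Lemma map_unit_patch (aR rR : pzSemiRingType) (f : {rmorphism aR -> rR})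
    m n (p : 'I_m -> option 'I_n) (A : 'M[aR]_(m, n)) :
  map_mx f (unit_patch p A) = unit_patch p (map_mx f A).
Proof. by apply/matrixP => i j; rewrite !mxE; case: (p i) => // k; rewrite rmorph_nat. Qed.

Lemma any_s_cols_indep_submx (F : fieldType) m1 m2 n s
    (A : 'M[F]_(m1, n)) (B : 'M[F]_(m2, n)) :
  (A <= B)%MS -> any_s_cols_indep s A -> any_s_cols_indep s B.
Proof.
case/submxP=> D -> indepA f f_inj.
have := indepA f f_inj; rewrite -mulmx_colsub trmx_mul /row_free => /eqP rkA.
by rewrite eqn_leq rank_leq_row -{1}rkA mxrankM_maxl.
Qed.

Section UnitPatchRank.
Variables (F : fieldType) (m n : nat) (A : 'M[F]_(m, n)).

Lemma row_unit_patch_some p i k :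
  p i = Some k -> row i (unit_patch p A) = delta_mx 0 k.
Proof. by move=> pi_k; apply/rowP => j; rewrite !mxE pi_k eqxx eq_sym. Qed.

Lemma row_unit_patch_eq p p' i :
  p i = p' i -> row i (unit_patch p A) = row i (unit_patch p' A).
Proof. by move=> e; apply/rowP => j; rewrite !mxE e. Qed.

Lemma unit_patch_grow p : (m <= n)%N -> pinjective p ->
    ~~ row_free (unit_patch p A) ->
  exists2 p', pinjective p' & (unit_patch p A < unit_patch p' A)%MS.
Proof.
move=> le_mn p_inj B_nfree; set B := unit_patch p A in B_nfree *.
have [i dep_i] := row_freePn _ B_nfree.
have /row_subPn[k] : ~~ (1%:M <= B)%MS.
  have : (\rank B < m)%N by rewrite ltn_neqAle B_nfree rank_leq_row.
  by apply: contraTN => /mxrankS; rewrite mxrank1; lia.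
rewrite row1 => ek_notin_B.
pose p' t := if t == i then Some k else p t.
have p'_i : p' i = Some k by rewrite /p' eqxx.
have p'_lift t : t != i -> p' t = p t by rewrite /p' => /negPf ->.
have p_not_k t : p t <> Some k.
  by move=> /row_unit_patch_some ek_row; rewrite -ek_row row_sub in ek_notin_B.
exists p'.
  move=> a b l; have [-> | a_i] := eqVneq a i; have [-> | b_i] := eqVneq b i => //.
  - by rewrite p'_i p'_lift // => -[<-] /p_not_k.
  - by rewrite p'_i p'_lift // => /[swap] -[<-] /p_not_k.
  - by rewrite !p'_lift //; apply: p_inj.
have B_sub : (B <= unit_patch p' A)%MS.
  apply/row_subP => t; have [->|t_i] := eqVneq t i.
    apply: submx_trans dep_i _; apply/row_subP => t'.
    rewrite row'Esub row_rowsub (row_unit_patch_eq (p':=p')) ?row_sub //.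
    by rewrite p'_lift // eq_sym neq_lift.
  by rewrite (row_unit_patch_eq (p':=p')) ?row_sub // p'_lift.
rewrite ltmxE B_sub; apply/negP => /(submx_trans (row_sub i _)).
by rewrite (row_unit_patch_some p'_i) (negPf ek_notin_B).
Qed.

Lemma unit_patch_row_free : (m <= n)%N ->
  exists p, [/\ pinjective p, (A <= unit_patch p A)%MS & row_free (unit_patch p A)].
Proof.
move=> le_mn.
suff grow p : pinjective p -> (A <= unit_patch p A)%MS ->
    exists p', [/\ pinjective p', (A <= unit_patch p' A)%MS & row_free (unit_patch p' A)].
  have patch_none : unit_patch (fun=> None) A = A by apply/matrixP => i j; rewrite mxE.
  by apply: (grow (fun=> None)) => //; rewrite patch_none.
have [d] := ubnP (m - \rank (unit_patch p A)); elim: d p => // d IH p lt_d p_inj A_sub.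
have [B_free | B_nfree] := boolP (row_free (unit_patch p A)); first by exists p.
have [p' p'_inj lt_B] := unit_patch_grow le_mn p_inj B_nfree.
apply: IH p'_inj (submx_trans A_sub (ltmxW lt_B)).
by have := rank_ltmx lt_B; have := rank_leq_row (unit_patch p' A); lia.
Qed.

End UnitPatchRank.

Section EuclideanNorm.
Variable R : realType.

Lemma norm2_ge0 n (x : 'cV[R]_n) : 0 <= norm2 x.
Proof. exact: sqrtr_ge0. Qed.

Lemma sqr_norm2 n (x : 'cV[R]_n) : norm2 x ^+ 2 = \sum_(i < n) x i 0 ^+ 2.
Proof. by rewrite sqr_sqrtr // sumr_ge0 // => i _; rewrite sqr_ge0. Qed.

Lemma norm2_coord_le n (x : 'cV[R]_n) j : `|x j 0| <= norm2 x.
Proof.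
rewrite -sqrtr_sqr ler_sqrt ?sumr_ge0 // => [|i _]; last exact: sqr_ge0.
by rewrite (bigD1 j) //= lerDl sumr_ge0 // => i _; rewrite sqr_ge0.
Qed.

Lemma opnorm_bounded m n (A : 'M[R]_(m, n)) :
  exists C, forall x : 'cV[R]_n, norm2 x <= 1 -> norm2 (A *m x) <= C.
Proof.
pose c i := \sum_(j < n) `|A i j|.
exists (Num.sqrt (\sum_(i < m) c i ^+ 2)) => x x_le1.
rewrite ler_sqrt ?sumr_ge0 // => [|i _]; last exact: sqr_ge0.
apply: ler_sum => i _.
have Ax_le : `|(A *m x) i 0| <= c i.
  rewrite mxE; apply: le_trans (ler_norm_sum _ _ _) (ler_sum _ _) => j _.
  rewrite normrM ler_piMr // (le_trans (norm2_coord_le x j)) //.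
rewrite -real_normK ?num_real // lerXn2r // nnegrE //.
exact: le_trans Ax_le.
Qed.

Lemma opnorm_ge m n (A : 'M[R]_(m, n)) (x : 'cV[R]_n) :
  norm2 x <= 1 -> norm2 (A *m x) <= opnorm A.
Proof.
move=> x_le1; apply: sup_upper_bound; last by exists x.
split; first by exists (norm2 (A *m x)), x.
by have [C C_ub] := opnorm_bounded A; exists C => _ [y y_le1 <-]; apply: C_ub.
Qed.

Lemma opnorm_le m n (A : 'M[R]_(m, n)) c :
  (forall x : 'cV[R]_n, norm2 x <= 1 -> norm2 (A *m x) <= c) -> opnorm A <= c.
Proof.
move=> ub; apply: ge_sup; last by move=> _ [y y_le1 <-]; apply: ub.
exists (norm2 (A *m 0)), 0 => //=.
by rewrite /norm2 big1 ?sqrtr0 // => i _; rewrite mxE expr0n.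
Qed.

Lemma unit_patch_mul m n p (A : 'M[R]_(m, n)) (x : 'cV[R]_n) i :
  (unit_patch p A *m x) i 0 = if p i is Some k then x k 0 else (A *m x) i 0.
Proof.
rewrite [LHS]mxE; case pi: (p i) => [k|]; last first.
  by rewrite mxE; apply: eq_bigr => j _; rewrite mxE pi.
rewrite (bigD1 k) //= big1 ?addr0 => [|j /negPf k_j]; first by rewrite mxE pi eqxx mul1r.
by rewrite mxE pi eq_sym k_j mul0r.
Qed.

Lemma sqr_norm2_unit_patch_mul m n p (A : 'M[R]_(m, n)) (x : 'cV[R]_n) :
  pinjective p ->
  norm2 (unit_patch p A *m x) ^+ 2 <= norm2 (A *m x) ^+ 2 + norm2 x ^+ 2.
Proof.
move=> p_inj; rewrite !sqr_norm2.
pose hit i k : R := (p i == Some k)%:R.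
have row_le i : (unit_patch p A *m x) i 0 ^+ 2
    <= (A *m x) i 0 ^+ 2 + \sum_(k < n) hit i k * x k 0 ^+ 2.
  rewrite unit_patch_mul /hit; case: (p i) => [k|]; last first.
    by rewrite big1 ?addr0 // => j _; rewrite mul0r.
  rewrite (bigD1 k) //= eqxx mul1r big1 ?addr0 ?lerDr ?sqr_ge0 // => j k_j.
  by rewrite (inj_eq Some_inj) eq_sym (negPf k_j) mul0r.
have hit_le1 k : \sum_(i < m) hit i k <= 1.
  case: (pickP (fun i => p i == Some k)) => [i0 /eqP p_i0 | none]; last first.
    by rewrite big1 // => i _; rewrite /hit none.
  rewrite (bigD1 i0) //= big1 => [|i i_i0]; first by rewrite /hit p_i0 eqxx addr0.
  by rewrite /hit; case: eqP => // /(p_inj _ _ _)/(_ p_i0) i_eq; rewrite i_eq eqxx in i_i0.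
apply: le_trans (ler_sum _ (fun i _ => row_le i)) _.
rewrite big_split lerD2l /= exchange_big ler_sum // => k _.
by rewrite -mulr_suml ler_piMl ?sqr_ge0.
Qed.

Lemma opnorm_unit_patch m n p (A : 'M[R]_(m, n)) : pinjective p ->
  opnorm (unit_patch p A) <= Num.sqrt (1 + opnorm A ^+ 2).
Proof.
move=> p_inj; apply: opnorm_le => x x_le1.
rewrite -[norm2 _]ger0_norm ?norm2_ge0 // -sqrtr_sqr ler_sqrt ?addr_ge0 ?sqr_ge0 //.
apply: le_trans (sqr_norm2_unit_patch_mul A x p_inj) _; rewrite addrC.
apply: lerD; first by rewrite exprn_ile1 ?norm2_ge0.
have Ax_le := opnorm_ge A x_le1.
by rewrite lerXn2r ?nnegrE ?norm2_ge0 // (le_trans (norm2_ge0 _) Ax_le).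
Qed.

End EuclideanNorm.

Theorem mainTheorem6 (R : realType) (m n s : nat) :
  (s <= m)%N -> (m <= n)%N ->
  forall A : 'M[int]_(m, n),
    any_s_cols_indep s (intmx R A) ->
    exists B : 'M[int]_(m, n),
      [/\ any_s_cols_indep s (intmx R B),
          \rank (intmx R B) = m &
          opnorm (intmx R B) <= Num.sqrt (1 + opnorm (intmx R A) ^+ 2)].
Proof.
move=> _ le_mn A indepA.
have [p [p_inj A_sub B_free]] := unit_patch_row_free (intmx R A) le_mn.
exists (unit_patch p A); rewrite /intmx map_unit_patch -/(intmx R A).
split; [exact: any_s_cols_indep_submx indepA | exact/eqP | exact: opnorm_unit_patch].
Qed.
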